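(* Let $n\ge 1$, $m\ge 2$, $0\le k\le n-1$ with $(m,k)\ne(2,0)$. Then the class $\mathcal{C}^k_{ac}$ of all complete $k$-bounded acyclic CP-nets over $n$ variables of domain size $m$, over the instance space $\mathcal{X}_{swap}$, is not extremal.
   Context: Variables $V=\{v_1,\dots,v_n\}$, each with a finite domain of size $m$. An outcome assigns a value to every variable; $\mathcal{O}_X$ denotes assignments to $X\subseteq V$. A complete CP-net specifies for each $v_i$ a parent set $Pa(v_i)\subseteq V\setminus\{v_i\}$ and, for each context $\gamma\in\mathcal{O}_{Pa(v_i)}$, a strict total order $\succ^{v_i}_\gamma$ on $D_{v_i}$; parents are non-dummy. Acyclic: graph with edges $(v_j,v_i)$, $v_j\in Pa(v_i)$, acyclic; $k$-bounded: all $|Pa(v_i)|\le k$. Improving flip: changing only $v_i$ to a value preferred under $\succ^{v_i}_{o[Pa(v_i)]}$; $o'\succ o$ iff a nonempty sequence of improving flips leads from $o$ to $o'$. A swap is an ordered pair $x=(x.1,x.2)$ of outcomes differing in exactly one variable; $\mathcal{X}_{swap}$ contains exactly one ordering of each such pair (fixed arbitrarily); a CP-net $N$ is the concept $c_N(x)=1$ iff $x.1\succ x.2$. A class $\mathcal{C}$ over $\mathcal{X}$ shatters $S\subseteq\mathcal{X}$ if every labeling of $S$ is realized; it strongly shatters $S$ if some subclass $\mathcal{C}'\subseteq\mathcal{C}$ shatters $S$ and all concepts in $\mathcal{C}'$ agree on every instance of $\mathcal{X}\setminus S$. $\mathcal{C}$ is extremal if it strongly shatters every set it shatters. *)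

From mathcomp Require Import all_boot all_fingroup.
Set Implicit Arguments. Unset Strict Implicit. Unset Printing Implicit Defensive.

Definition outcome (n m : nat) := {ffun 'I_n -> 'I_m}.

(* A complete CP-net: parent sets and, for each variable, a conditional
   preference table mapping each outcome (through its context) to a strict
   total order on 'I_m, represented by a ranking permutation: value a is
   preferred to b under p iff p a < p b. *)
Record cpnet (n m : nat) := CPNet {
  pa  : 'I_n -> {set 'I_n};
  cpt : 'I_n -> outcome n m -> {perm 'I_m} }.

Definition pref_val (m : nat) (p : {perm 'I_m}) (a b : 'I_m) : bool :=
  (p a < p b)%N.

Definition valid_cpnet n m (N : cpnet n m) : Prop :=
  (forall i, i \notin pa N i) /\
  (forall i (o o' : outcome n m),
      (forall j, j \in pa N i -> o j = o' j) -> cpt N i o = cpt N i o') /\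
  (forall i j, j \in pa N i ->
      exists o o' : outcome n m,
        (forall l, l != j -> o l = o' l) /\ cpt N i o <> cpt N i o').

Definition dep_edge n m (N : cpnet n m) : rel 'I_n := fun a b => a \in pa N b.

Definition acyclic_cpnet n m (N : cpnet n m) : Prop :=
  forall i j, dep_edge N j i -> ~~ connect (dep_edge N) i j.

Definition k_bounded n m (k : nat) (N : cpnet n m) : Prop :=
  forall i, (#|pa N i| <= k)%N.

Definition improving_flip n m (N : cpnet n m) : rel (outcome n m) :=
  fun o o' => [exists i, [forall j, (j != i) ==> (o' j == o j)]
                         && pref_val (cpt N i o) (o' i) (o i)].

Definition cp_prefers n m (N : cpnet n m) (o' o : outcome n m) : bool :=
  [exists o1, improving_flip N o o1 && connect (improving_flip N) o1 o'].

Definition instance n m := (outcome n m * outcome n m)%type.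

Definition cp_concept n m (N : cpnet n m) : instance n m -> bool :=
  fun x => cp_prefers N x.1 x.2.

Definition is_swap n m (x : instance n m) : bool :=
  #|[set i | x.1 i != x.2 i]| == 1.

Definition swap_instance_space n m (X : {set instance n m}) : Prop :=
  (forall x, x \in X -> is_swap x) /\
  (forall o o' : outcome n m, is_swap (o, o') ->
      ((o, o') \in X) (+) ((o', o) \in X)).

(* Concept classes over instance space X (concepts are compared on X only). *)
Definition concept_class (T : Type) := (T -> bool) -> Prop.

Definition shatters (T : finType) (C : concept_class T) (S : {set T}) : Prop :=
  forall L : T -> bool, exists c, C c /\ forall x, x \in S -> c x = L x.

Definition strongly_shatters (T : finType) (X : {set T}) (C : concept_class T)
    (S : {set T}) : Prop :=
  exists C' : concept_class T,
    (forall c, C' c -> C c) /\ shatters C' S /\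
    (forall c c', C' c -> C' c' -> forall x, x \in X -> x \notin S -> c x = c' x).

Definition extremal (T : finType) (X : {set T}) (C : concept_class T) : Prop :=
  forall S : {set T}, S \subset X -> shatters C S -> strongly_shatters X C S.

Definition C_ac (n m k : nat) : concept_class (instance n m) :=
  fun c => exists N : cpnet n m,
    valid_cpnet N /\ acyclic_cpnet N /\ k_bounded k N /\ c = cp_concept N.

From mathcomp Require Import all_boot all_fingroup.
Set Implicit Arguments. Unset Strict Implicit. Unset Printing Implicit Defensive.

(* An acyclic CP-net induces a strict order on outcomes, so on a swap the
   concept of a net just records which of the two outcomes is preferred.  Take
   a cycle of swaps c_0, ..., c_r, c_0 (r >= 2) and let S be the sample of the
   swaps c_j c_(j+1), chosen so that the class shatters S.  A subclass strongly
   shattering S contains a net orienting every swap of S forwards, hence with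
   c_0 > c_r by transitivity, and one orienting them backwards, hence with
   c_r > c_0; these disagree on the closing swap, which lies outside S.  For
   m >= 3 the cycle 0, 1, 2 in one variable works with parentless nets; for
   m = 2 the cycle 00, 10, 11, 01 in two variables needs the first variable to
   depend on the second, whence k >= 1. *)

Section StrongComponents.
Variables (T : finType) (e : rel T).

Definition strong_component (o : T) : {set T} :=
  [set x | connect e o x && connect e x o].

Lemma strong_component_nonincreasing_const (f : T -> nat) o :
  {in strong_component o &, forall x z, e x z -> f z <= f x} ->
  {in strong_component o, forall x, f x = f o}.
Proof.
move=> f_dec.
have f_path x y : x \in strong_component o -> connect e x y -> connect e y o ->
    f y <= f x.
  move=> + /connectP[p x_p ->]; elim: p x x_p => [//|z p IH] x /= /andP[e_xz z_p].
  move=> x_in p_o; have z_in : z \in strong_component o.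
    move: x_in; rewrite !inE => /andP[o_x _].
    rewrite (connect_trans o_x (connect1 e_xz)) /=.
    by apply: connect_trans p_o; apply/connectP; exists p.
  exact: leq_trans (IH z z_p z_in p_o) (f_dec x z x_in z_in e_xz).
have o_in : o \in strong_component o by rewrite inE connect0.
move=> x x_in; have := x_in; rewrite inE => /andP[o_x x_o].
by apply/eqP; rewrite eqn_leq (f_path o) ?(f_path x) ?connect0.
Qed.

Hypothesis e_acyclic : forall i j, e j i -> ~~ connect e i j.

Lemma acyclic_source (A : {set T}) : A != set0 ->
  exists2 v, v \in A & forall u, e u v -> u \notin A.
Proof.
case/set0Pn => a a_in.
pose ancestors v := [set w | [exists i, e w i && connect e i v]].
have [v v_in v_min] := arg_minnP (fun v => #|ancestors v|) a_in.
exists v => // u e_uv; apply/negP => u_in.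
have := v_min u u_in; apply/negP; rewrite -ltnNge; apply: proper_card.
apply/properP; split.
  apply/subsetP => w; rewrite !inE => /existsP[i /andP[e_wi i_u]].
  by apply/existsP; exists i; rewrite e_wi (connect_trans i_u (connect1 e_uv)).
exists u; first by rewrite inE; apply/existsP; exists v; rewrite e_uv connect0.
by rewrite inE; apply/existsP => -[i /andP[e_ui i_u]]; case/negP: (e_acyclic e_ui).
Qed.

End StrongComponents.

Lemma pref_valC m (p : {perm 'I_m}) (a b : 'I_m) :
  a != b -> pref_val p b a = ~~ pref_val p a b.
Proof.
move=> ab; rewrite /pref_val.
have pab : (p a : nat) != p b by rewrite (inj_eq val_inj) (inj_eq perm_inj).
by case: ltngtP pab.
Qed.

Lemma pref_val_exists m (a b : 'I_m) (beta : bool) : a != b ->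
  exists P : {perm 'I_m}, pref_val P a b = beta.
Proof.
move=> ab; have [|ab_beta] := eqVneq (pref_val 1 a b) beta; first by exists 1%g.
exists (tperm a b); have := pref_valC 1 ab.
rewrite /pref_val tpermL tpermR !perm1 in ab_beta * => ->.
by case: beta ab_beta; case: (_ < _)%N.
Qed.

Section CPNetOrder.
Variables n m : nat.
Implicit Types (N : cpnet n m) (a b o x z : outcome n m).

Definition swap_at (i : 'I_n) a b : Prop :=
  a i != b i /\ forall j, j != i -> a j = b j.

Lemma swap_atC i a b : swap_at i a b -> swap_at i b a.
Proof. by case=> ab_i ab_off; split=> [|j /ab_off->] //; rewrite eq_sym. Qed.

Lemma swap_at_is_swap i a b : swap_at i a b -> is_swap (a, b).
Proof.
case=> ab_i ab_off; apply/cards1P; exists i; apply/setP => j; rewrite !inE.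
by have [->|/ab_off->] := eqVneq j i; rewrite ?ab_i ?eqxx.
Qed.

Lemma is_swap_at a b : is_swap (a, b) -> exists i, swap_at i a b.
Proof.
case/cards1P => i /setP diff; exists i; have := diff i; rewrite !inE eqxx => ab_i.
split=> // j ji; have := diff j; rewrite !inE (negbTE ji).
by move/negbT/negPn/eqP.
Qed.

Lemma improving_flip_rank N x z v :
  improving_flip N x z -> cpt N v x (z v) <= cpt N v x (x v).
Proof.
case/existsP => i /andP[/forallP same flip].
have [<-|iv] := eqVneq i v; first exact: ltnW.
by rewrite (eqP (implyP (same v) _)) // eq_sym.
Qed.

Lemma improving_flip_swap_at N i a b : swap_at i a b ->
  improving_flip N b a = pref_val (cpt N i b) (a i) (b i).
Proof.
case=> ab_i ab_off; apply/existsP/idP => [[j /andP[/forallP same flip]]|flip].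
  have [<- //|ji] := eqVneq j i.
  by move: (same i); rewrite eq_sym ji (negbTE ab_i).
by exists i; rewrite flip andbT; apply/forallP => j; apply/implyP => /ab_off->.
Qed.

Lemma flip_cp_prefers N a b : improving_flip N b a -> cp_prefers N a b.
Proof. by move=> flip; apply/existsP; exists a; rewrite flip connect0. Qed.

Lemma cp_prefers_trans N a b o :
  cp_prefers N a b -> cp_prefers N b o -> cp_prefers N a o.
Proof.
move=> /existsP[a1 /andP[flip_a1 a1_a]] /existsP[b1 /andP[flip_b1 b1_b]].
apply/existsP; exists b1; rewrite flip_b1 /=.
exact: connect_trans b1_b (connect_trans (connect1 flip_a1) a1_a).
Qed.

Section ValidAcyclic.
Variable N : cpnet n m.
Hypotheses (N_valid : valid_cpnet N) (N_acyclic : acyclic_cpnet N).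

(* On a flip cycle, pick a changing variable v none of whose parents changes
   (acyclicity); then v's table is fixed along the cycle and the rank of the
   value of v can only decrease, so v never changes after all. *)
Lemma cp_prefers_irr o : ~~ cp_prefers N o o.
Proof.
apply/negP => /existsP[o1 /andP[flip_o1 o1_o]].
have [_ [cpt_ctx _]] := N_valid.
pose R := strong_component (improving_flip N) o.
pose V := [set i | [exists x in R, x i != o i]].
have o1_R : o1 \in R by rewrite inE connect1.
have V_ne : V != set0.
  case/existsP: flip_o1 => i /andP[_ pref]; apply/set0Pn; exists i.
  rewrite inE; apply/existsP; exists o1; rewrite o1_R /=.
  by apply: contraTneq pref => ->; rewrite /pref_val ltnn.
have [v v_V v_src] := acyclic_source N_acyclic V_ne.
have cpt_R : {in R, forall x, cpt N v x = cpt N v o}.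
  move=> x x_R; apply: cpt_ctx => j /v_src j_V; apply/eqP.
  by apply: contraNT j_V => x_j; rewrite inE; apply/existsP; exists x; rewrite x_R.
have rank_R := @strong_component_nonincreasing_const _ (improving_flip N)
  (fun x => cpt N v o (x v)) o.
move: v_V; rewrite inE => /existsP[x /andP[x_R /eqP]]; apply.
apply: (@perm_inj _ (cpt N v o)); apply: val_inj.
apply: (rank_R _ x x_R) => y z y_R z_R flip.
by rewrite -(cpt_R y y_R); apply: improving_flip_rank.
Qed.

Lemma cp_prefers_asym a b : cp_prefers N a b -> ~~ cp_prefers N b a.
Proof.
by move=> ab; apply/negP => /(cp_prefers_trans ab); apply/negP/cp_prefers_irr.
Qed.

Lemma cpt_swap_at i a b : swap_at i a b -> cpt N i a = cpt N i b.
Proof.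
case: N_valid => no_self [cpt_ctx _] [_ ab_off]; apply: cpt_ctx => j j_pa.
by apply: ab_off; apply: contraNneq (no_self i) => ji; rewrite -ji in j_pa *.
Qed.

Lemma cp_prefers_swap_at i a b : swap_at i a b ->
  cp_prefers N a b = pref_val (cpt N i b) (a i) (b i).
Proof.
move=> ab; apply/idP/idP => [ab_pref|]; last first.
  by rewrite -improving_flip_swap_at //; apply: flip_cp_prefers.
apply: contraTT ab_pref => not_pref; apply: cp_prefers_asym; apply: flip_cp_prefers.
rewrite (improving_flip_swap_at _ (swap_atC ab)) (cpt_swap_at ab).
by rewrite pref_valC //; case: ab.
Qed.

Lemma cp_prefers_swapC a b : is_swap (a, b) -> cp_prefers N b a = ~~ cp_prefers N a b.
Proof.
case/is_swap_at => i ab; rewrite (cp_prefers_swap_at (swap_atC ab)).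
by rewrite (cp_prefers_swap_at ab) (cpt_swap_at ab) pref_valC //; case: ab.
Qed.

End ValidAcyclic.
End CPNetOrder.

Definition steps (T : Type) (x : T) (p : seq T) : seq (T * T) := zip (x :: p) p.

Lemma path_steps (T : Type) (e : rel T) x p :
  path e x p = all (fun st => e st.1 st.2) (steps x p).
Proof. by elim: p x => //= y p IH x; rewrite IH. Qed.

Lemma path_rel_last (T : Type) (e : rel T) x y p :
  transitive e -> path e x (y :: p) -> e x (last y p).
Proof.
move=> e_trans; elim: p x y => [|z p IH] x y /=; first by rewrite andbT.
by case/andP=> e_xy /IH; apply: e_trans.
Qed.

Lemma mem_steps (T : eqType) (x : T) p u w :
  (u, w) \in steps x p -> (u \in x :: p) && (w \in p).
Proof.
elim: p x => [//|y p IH] x; rewrite /steps /= !inE => /orP[/eqP[-> ->]|/IH].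
  by rewrite !eqxx.
by rewrite !inE => /andP[-> ->]; rewrite !orbT.
Qed.

Lemma steps_cons (T : Type) (x y : T) p : steps x (y :: p) = (x, y) :: steps y p.
Proof. by []. Qed.

Lemma index_steps (T : eqType) (x : T) p u w : uniq (x :: p) ->
  (u, w) \in steps x p -> index w (x :: p) = (index u (x :: p)).+1.
Proof.
elim: p x => [//|y p IH] x /andP[x_yp uniq_yp].
rewrite steps_cons in_cons => /orP[/eqP[-> ->]|uw].
  have xy : x != y by apply: contraNneq x_yp => ->; apply: mem_head.
  by rewrite /= !eqxx (negbTE xy).
have /andP[u_yp w_p] := mem_steps uw.
have w_yp : w \in y :: p by rewrite in_cons w_p orbT.
move: (y :: p) x_yp uniq_yp u_yp w_yp (IH y uniq_yp uw) => s x_s _ u_s w_s IHs.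
have xu : x != u by apply: contraNneq x_s => ->.
have xw : x != w by apply: contraNneq x_s => ->.
by rewrite /= (negbTE xu) (negbTE xw) IHs.
Qed.

Lemma steps_antisym (T : eqType) (x : T) p u w : uniq (x :: p) ->
  (u, w) \in steps x p -> (w, u) \notin steps x p.
Proof.
move=> uniq_s uw; apply/negP => /(index_steps uniq_s).
by rewrite (index_steps uniq_s uw) => /eqP; rewrite ltn_eqF.
Qed.

Section SwapCycles.
Variables n m : nat.
Implicit Types (N M : cpnet n m) (a b c u w : outcome n m) (X : {set instance n m}).

Definition orient X a b : instance n m := if (a, b) \in X then (a, b) else (b, a).

Lemma orient_in X a b : swap_instance_space X -> is_swap (a, b) -> orient X a b \in X.
Proof.
case=> _ X_swaps ab; rewrite /orient; case: ifP => // ab_X.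
by move: (X_swaps a b ab); rewrite ab_X.
Qed.

Lemma orient_eq X a b u w :
  orient X a b = orient X u w -> (a, b) = (u, w) \/ (a, b) = (w, u).
Proof. by rewrite /orient; do 2 case: ifP => _; case=> -> ->; auto. Qed.

Lemma cp_concept_orient X N a b : valid_cpnet N -> acyclic_cpnet N ->
  is_swap (a, b) -> cp_concept N (orient X a b) = (cp_prefers N a b == ((a, b) \in X)).
Proof.
move=> N_valid N_acyclic ab; rewrite /orient /cp_concept; case: ifP => _ /=.
  by rewrite eqb_id.
by rewrite (cp_prefers_swapC N_valid N_acyclic ab) eqbF_neg.
Qed.

Definition path_swaps X c p : {set instance n m} :=
  [set orient X st.1 st.2 | st in steps c p].

Lemma shatters_path_swaps k X c p : path [rel a b | is_swap (a, b)] c p ->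
  (forall d : outcome n m -> outcome n m -> bool, exists N,
     [/\ valid_cpnet N, acyclic_cpnet N, k_bounded k N &
         {in steps c p, forall st, cp_prefers N st.1 st.2 = d st.1 st.2}]) ->
  shatters (@C_ac n m k) (path_swaps X c p).
Proof.
move=> swaps orientable L.
have [N [N_valid N_acyclic N_bounded N_steps]] :=
  orientable (fun u w => L (orient X u w) == ((u, w) \in X)).
exists (cp_concept N); split; first by exists N.
move=> _ /imsetP[[u w] uw_step ->] /=.
have uw_swap : is_swap (u, w) by move: swaps; rewrite path_steps => /allP/(_ _ uw_step).
rewrite cp_concept_orient // (N_steps _ uw_step) /=.
by case: (L _); case: (_ \in X).
Qed.

Lemma path_swaps_forced X M c p (b : bool) :
  valid_cpnet M -> acyclic_cpnet M -> uniq (c :: p) ->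
  path [rel a b | is_swap (a, b)] c p ->
  {in path_swaps X c p, forall z, cp_concept M z = ((z \in steps c p) == b)} ->
  {in steps c p, forall st, cp_prefers M st.1 st.2 = b}.
Proof.
move=> M_valid M_acyclic uniq_s swaps M_label [u w] uw_step /=.
have uw_swap : is_swap (u, w) by move: swaps; rewrite path_steps => /allP/(_ _ uw_step).
move/(_ _ (imset_f (fun st => orient X st.1 st.2) uw_step)): M_label.
have -> : (orient X u w \in steps c p) = ((u, w) \in X).
  by rewrite /orient; case: ifP => // _; apply: negbTE (steps_antisym uniq_s uw_step).
rewrite cp_concept_orient //.
by case: (cp_prefers _ _ _); case: b; case: (_ \in X).
Qed.

Lemma closing_notin_path_swaps X c p : uniq (c :: p) -> 1 < size p ->
  orient X c (last c p) \notin path_swaps X c p.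
Proof.
move=> uniq_s size_p; apply/imsetP => -[[u w] uw /orient_eq [] [cu lw]];
  subst u w; move: (index_steps uniq_s uw); rewrite index_head //.
by rewrite index_last // => size1; rewrite size1 in size_p.
Qed.

Theorem swap_cycle_not_extremal k X c p :
  swap_instance_space X -> uniq (c :: p) -> 1 < size p ->
  path [rel a b | is_swap (a, b)] c p -> is_swap (c, last c p) ->
  shatters (@C_ac n m k) (path_swaps X c p) -> ~ extremal X (@C_ac n m k).
Proof.
case: p => [//|y p] X_swaps uniq_s size_p swaps closing shattered extremal_X.
have swap_steps : {in steps c (y :: p), forall st, is_swap st}.
  by move: swaps; rewrite path_steps => /allP swaps [u w] /swaps.
have S_X : path_swaps X c (y :: p) \subset X.
  by apply/subsetP => _ /imsetP[[u w] /swap_steps uw ->]; apply: orient_in.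
have [C' [C'_sub [C'_shatters C'_agree]]] := extremal_X _ S_X shattered.
have oriented (b : bool) : exists M,
    [/\ valid_cpnet M, acyclic_cpnet M, C' (cp_concept M) &
    {in steps c (y :: p), forall st, cp_prefers M st.1 st.2 = b}].
  have [c' [C'_c' c'_label]] := C'_shatters (fun z => (z \in steps c (y :: p)) == b).
  have [M [M_valid [M_acyclic [_ c'_M]]]] := C'_sub _ C'_c'; subst c'.
  exists M; split=> //.
  exact: path_swaps_forced M_valid M_acyclic uniq_s swaps c'_label.
have [M1 [M1_valid M1_acyclic C'_M1 M1_fwd]] := oriented true.
have [M2 [M2_valid M2_acyclic C'_M2 M2_bwd]] := oriented false.
have M1_cl : cp_prefers M1 c (last y p).
  apply: (path_rel_last (fun b a o => @cp_prefers_trans _ _ M1 a b o)).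
  by rewrite path_steps; apply/allP => st /M1_fwd.
have M2_lc : cp_prefers M2 (last y p) c.
  apply: (path_rel_last (e := [rel a b | cp_prefers M2 b a])).
    by move=> b a o ab bo; apply: cp_prefers_trans bo ab.
  rewrite path_steps; apply/allP => -[u w] uw /=.
  rewrite (cp_prefers_swapC M2_valid M2_acyclic (swap_steps _ uw)).
  exact: negbT (M2_bwd _ uw).
have y_X : orient X c (last y p) \in X := orient_in X_swaps closing.
have := C'_agree _ _ C'_M1 C'_M2 _ y_X (closing_notin_path_swaps X uniq_s size_p).
rewrite !cp_concept_orient // M1_cl.
have := cp_prefers_asym M2_valid M2_acyclic M2_lc.
by case: (cp_prefers M2 _ _); case: (_ \in X).
Qed.

End SwapCycles.

Definition flat_net n m (P : {perm 'I_m}) : cpnet n m :=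
  CPNet (fun _ => set0) (fun _ _ => P).

Lemma flat_net_in_class n m k (P : {perm 'I_m}) :
  [/\ valid_cpnet (flat_net n P), acyclic_cpnet (flat_net n P) &
      k_bounded k (flat_net n P)].
Proof.
split; last by move=> i; rewrite cards0.
  by split=> [i|]; [rewrite inE | split=> // i j; rewrite inE].
by move=> i j; rewrite /dep_edge inE.
Qed.

Section LargeDomain.
Variables (n m k : nat) (v0 : 'I_n).

Let z0 : 'I_m.+3 := Ordinal (isT : 0 < m.+3).
Let z1 : 'I_m.+3 := Ordinal (isT : 1 < m.+3).
Let z2 : 'I_m.+3 := Ordinal (isT : 2 < m.+3).

Definition point (a : 'I_m.+3) : outcome n m.+3 :=
  [ffun j => if j == v0 then a else z0].

Lemma point_inj : injective point.
Proof.
by move=> a b /(congr1 (fun o : outcome n m.+3 => o v0)); rewrite !ffunE eqxx.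
Qed.

Lemma swap_at_point a b : a != b -> swap_at v0 (point a) (point b).
Proof. by move=> ab; split=> [|j /negbTE j_v0]; rewrite !ffunE ?eqxx ?j_v0. Qed.

Lemma cp_prefers_flat_point P a b : a != b ->
  cp_prefers (flat_net n P) (point a) (point b) = pref_val P a b.
Proof.
move=> ab; have [P_valid P_acyclic _] := flat_net_in_class n k P.
by rewrite (cp_prefers_swap_at P_valid P_acyclic (swap_at_point ab)) !ffunE eqxx.
Qed.

Lemma pref_val_exists3 (b01 b12 : bool) : exists P : {perm 'I_m.+3},
  pref_val P z0 z1 = b01 /\ pref_val P z1 z2 = b12.
Proof.
rewrite /pref_val; case: b01; case: b12.
- by exists 1%g; rewrite !perm1.
- by exists (tperm z1 z2); rewrite tpermL tpermR tpermD.
- by exists (tperm z0 z1); rewrite tpermL tpermR tpermD.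
- by exists (tperm z0 z2); rewrite tpermL tpermR tpermD.
Qed.

Lemma not_extremal_large_domain X :
  swap_instance_space X -> ~ extremal X (@C_ac n m.+3 k).
Proof.
move=> X_swaps.
have swaps : path [rel a b | is_swap (a, b)] (point z0) [:: point z1; point z2].
  by rewrite /= !(swap_at_is_swap (swap_at_point _)).
apply: (swap_cycle_not_extremal X_swaps _ _ swaps) => //.
- by rewrite /= !inE !(inj_eq point_inj).
- exact/swap_at_is_swap/swap_at_point.
apply: shatters_path_swaps swaps _ => d.
have [P [P01 P12]] :=
  pref_val_exists3 (d (point z0) (point z1)) (d (point z1) (point z2)).
have [P_valid P_acyclic P_bounded] := flat_net_in_class n k P.
exists (flat_net n P); split=> // st; rewrite !inE => /orP[] /eqP-> /=;
  by rewrite cp_prefers_flat_point.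
Qed.

End LargeDomain.

Section BinaryDomain.
Variables (n k : nat) (w0 w1 : 'I_n).
Hypothesis w10 : w1 != w0.

Let b0 : 'I_2 := ord0.
Let b1 : 'I_2 := ord_max.

Definition point2 (a b : 'I_2) : outcome n 2 :=
  [ffun j => if j == w0 then a else if j == w1 then b else b0].

Lemma point2_inj a b a' b' : (point2 a b == point2 a' b') = (a == a') && (b == b').
Proof.
apply/eqP/andP => [ab|[/eqP-> /eqP->] //].
have := congr1 (fun o : outcome n 2 => (o w0, o w1)) ab.
by rewrite /= !ffunE eqxx (negbTE w10) eqxx => -[-> ->].
Qed.

Lemma swap_at_point2_w0 a a' b : a != a' -> swap_at w0 (point2 a b) (point2 a' b).
Proof. by move=> aa'; split=> [|j /negbTE j_w0]; rewrite !ffunE ?eqxx ?j_w0. Qed.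

Lemma swap_at_point2_w1 a b b' : b != b' -> swap_at w1 (point2 a b) (point2 a b').
Proof.
by move=> bb'; split=> [|j /negbTE j_w1]; rewrite !ffunE ?eqxx ?j_w1 ?(negbTE w10).
Qed.

(* w1 is declared a parent of w0 only when P0 != P1: parents must be non-dummy. *)
Definition cond_net (P0 P1 Q : {perm 'I_2}) : cpnet n 2 :=
  CPNet (fun i => if (i == w0) && (P0 != P1) then [set w1] else set0)
        (fun i o => if i == w0 then (if o w1 == b0 then P0 else P1) else Q).

Lemma cond_net_in_class P0 P1 Q : [/\ valid_cpnet (cond_net P0 P1 Q),
  acyclic_cpnet (cond_net P0 P1 Q) & k_bounded k.+1 (cond_net P0 P1 Q)].
Proof.
have pa_cond i j : j \in pa (cond_net P0 P1 Q) i -> [/\ i = w0, j = w1 & P0 != P1].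
  rewrite /=; case: (eqVneq i w0) => [->|_] /=; last by rewrite inE.
  by case: ifP => P01; rewrite inE // => /eqP->.
split; last by move=> i /=; case: ifP; rewrite ?cards1 ?cards0.
- split=> [i|]; first by apply/negP => /pa_cond[-> E _]; move: w10; rewrite E eqxx.
  split=> [i o o' ctx|i j /pa_cond[-> -> P01]] /=.
    case: (eqVneq i w0) => [Ei|//]; case: (eqVneq P0 P1) => [->|P01].
      by do 2 case: ifP.
    by rewrite ctx // /= Ei eqxx P01 inE.
  exists (point2 b0 b0), (point2 b0 b1).
  split=> [l /negbTE l_w1|].
    by rewrite !ffunE l_w1.
  by rewrite /= eqxx !ffunE (negbTE w10) !eqxx; apply/eqP.
- move=> i j /pa_cond[-> -> _]; apply/negP => /connectP[[|z p] /=].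
    by move=> _ w01; move: w10; rewrite w01 eqxx.
  by case/andP=> /pa_cond[_ w01 _]; move: w10; rewrite w01 eqxx.
Qed.

Lemma cp_prefers_cond_w0 P0 P1 Q a a' b : a != a' ->
  cp_prefers (cond_net P0 P1 Q) (point2 a b) (point2 a' b) =
  pref_val (if b == b0 then P0 else P1) a a'.
Proof.
move=> aa'; have [N_valid N_acyclic _] := cond_net_in_class P0 P1 Q.
by rewrite (cp_prefers_swap_at N_valid N_acyclic (swap_at_point2_w0 b aa')) /=
  !ffunE (negbTE w10) !eqxx.
Qed.

Lemma cp_prefers_cond_w1 P0 P1 Q a b b' : b != b' ->
  cp_prefers (cond_net P0 P1 Q) (point2 a b) (point2 a b') = pref_val Q b b'.
Proof.
move=> bb'; have [N_valid N_acyclic _] := cond_net_in_class P0 P1 Q.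
by rewrite (cp_prefers_swap_at N_valid N_acyclic (swap_at_point2_w1 a bb')) /=
  !ffunE (negbTE w10) !eqxx.
Qed.

Lemma not_extremal_binary X :
  swap_instance_space X -> ~ extremal X (@C_ac n 2 k.+1).
Proof.
move=> X_swaps; have b01 : b0 != b1 by []; have b10 : b1 != b0 by [].
have swaps : path [rel a b | is_swap (a, b)]
    (point2 b0 b0) [:: point2 b1 b0; point2 b1 b1; point2 b0 b1].
  by rewrite /= (swap_at_is_swap (swap_at_point2_w0 _ b01))
    (swap_at_is_swap (swap_at_point2_w1 _ b01))
    (swap_at_is_swap (swap_at_point2_w0 _ b10)).
apply: (swap_cycle_not_extremal X_swaps _ _ swaps) => //.
- by rewrite /= !inE !point2_inj.
- exact/swap_at_is_swap/swap_at_point2_w1.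
apply: shatters_path_swaps swaps _ => d.
have [P0 P0_d] := pref_val_exists (d (point2 b0 b0) (point2 b1 b0)) b01.
have [Q Q_d] := pref_val_exists (d (point2 b1 b0) (point2 b1 b1)) b01.
have [P1 P1_d] := pref_val_exists (d (point2 b1 b1) (point2 b0 b1)) b10.
have [N_valid N_acyclic N_bounded] := cond_net_in_class P0 P1 Q.
exists (cond_net P0 P1 Q); split=> // st; rewrite !inE => /or3P[] /eqP-> /=.
- by rewrite cp_prefers_cond_w0.
- by rewrite cp_prefers_cond_w1.
- by rewrite cp_prefers_cond_w0.
Qed.

End BinaryDomain.

Theorem proposition5 (n m k : nat) :
  (1 <= n)%N -> (2 <= m)%N -> (k <= n - 1)%N -> (m, k) <> (2%N, 0%N) ->
  forall X : {set instance n m}, swap_instance_space X ->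
  ~ extremal X (@C_ac n m k).
Proof.
move=> n_gt0 m_ge2 k_le mk_ne X X_swaps.
case: m m_ge2 mk_ne X X_swaps => [|[|[|m]]] // _ mk_ne X X_swaps.
  case: k k_le mk_ne => [|k] // k_le _.
  case: n n_gt0 k_le X X_swaps => [|[|n]] // _ _ X X_swaps.
  exact: (not_extremal_binary (w0 := ord0) (w1 := ord_max)).
exact: (not_extremal_large_domain (Ordinal n_gt0)).
Qed.
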